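(* Let $G$ be a finite group, $S$ a subset of $G$, and $\sigma_1,\dots,\sigma_k$ pairwise commuting automorphisms of $G$ of order at most $2$. Assume the Cayley graph $C(G,S)$ is undirected and so is the twisted Cayley graph $C(G,S)^{\sigma_i}$ for every $1\le i\le k$. Suppose the spectrum of $C(G,S)$ contains no sub-multiset of size $\dim L^2(G)-\dim L^2(G)^{\sigma_1=1,\dots,\sigma_k=1}$ which is symmetric about the origin. Then $C(G,S)$ is non-isospectral to at least one of the twisted Cayley graphs $C(G,S)^{\prod_{i\in I}\sigma_i}$, where $I$ runs over the nonempty subsets of $\{1,\dots,k\}$. In particular, $C(G,S)$ is non-isomorphic to one of these twisted Cayley graphs.
   Context: $C(G,S)$ has vertex set $G$ and an edge from $x$ to $xs$ for each $s\in S$; for an automorphism $\tau$ of $G$, the twisted Cayley graph $C(G,S)^\tau$ has vertex set $G$ and an edge from $x$ to $\tau(xs)$ for each $s\in S$. A graph is undirected if its adjacency matrix is symmetric; its spectrum is the multiset of eigenvalues of its adjacency matrix, and two graphs on the same number of vertices are isospectral if their spectra coincide. $L^2(G)$ is the space of complex-valued functions on $G$, and $L^2(G)^{\sigma_1=1,\dots,\sigma_k=1}$ is the subspace of $f$ with $f\circ\sigma_i=f$ for all $i$. A multiset $M$ of complex numbers is symmetric about the origin if $M=-M$. *)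

From mathcomp Require Import all_boot all_order all_algebra all_fingroup all_field.
Set Implicit Arguments. Unset Strict Implicit. Unset Printing Implicit Defensive.
Import GRing.Theory Num.Theory.
Local Open Scope ring_scope.

(* Graphs on the vertex set of a finite type T are given by an edge-count
   function E x y = number of edges from x to y; their adjacency matrix is
   indexed by 'I_#|T| through enum_val. *)
Definition adjmx (T : finType) (E : T -> T -> nat) : 'M[algC]_#|T| :=
  \matrix_(i, j) (E (enum_val i) (enum_val j))%:R.

Definition twisted_edges (gT : finGroupType) (S : {set gT}) (tau : gT -> gT)
  (x y : gT) : nat := #|[set s in S | y == tau (x * s)%g]|.

Definition cayley_edges (gT : finGroupType) (S : {set gT}) (x y : gT) : nat :=
  #|[set s in S | y == (x * s)%g]|.

Definition cayley_adj (gT : finGroupType) (S : {set gT}) :=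
  adjmx (cayley_edges S).
Definition twisted_adj (gT : finGroupType) (S : {set gT}) (tau : gT -> gT) :=
  adjmx (twisted_edges S tau).

Definition undirected n (A : 'M[algC]_n) : Prop := A^T = A.

(* spectrum: multiset (seq up to permutation) of the roots of the
   characteristic polynomial, i.e. eigenvalues with algebraic multiplicity *)
Definition spectrum n (A : 'M[algC]_n) : seq algC :=
  sval (closed_field_poly_normal (char_poly A)).

Definition isospectral n (A B : 'M[algC]_n) : Prop :=
  perm_eq (spectrum A) (spectrum B).

Definition submultiset (s t : seq algC) : Prop :=
  forall a, (count_mem a t <= count_mem a s)%N.

Definition symmetric_about_origin (t : seq algC) : Prop :=
  perm_eq t (map -%R t).

Definition is_group_aut (gT : finGroupType) (f : gT -> gT) : Prop :=
  bijective f /\ {morph f : x y / (x * y)%g}.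

Definition graph_iso (T : finType) (E1 E2 : T -> T -> nat) : Prop :=
  exists phi : T -> T, bijective phi /\ forall x y, E2 (phi x) (phi y) = E1 x y.

Definition L2 (gT : finGroupType) := {ffun gT -> algC^o}.

Definition precomp_minus (gT : finGroupType) (sg : gT -> gT) (f : L2 gT) : L2 gT :=
  [ffun x => f (sg x)] - f.

Definition L2_fixed (gT : finGroupType) k (sigma : 'I_k -> gT -> gT)
  : {vspace L2 gT} :=
  (\bigcap_(i < k) lker (linfun (precomp_minus (sigma i))))%VS.

Definition aut_prod (gT : finGroupType) k (sigma : 'I_k -> gT -> gT)
  (I : {set 'I_k}) : gT -> gT :=
  foldr (fun i f => sigma i \o f) id (enum I).

From HB Require Import structures.
From mathcomp Require Import all_boot all_order all_algebra all_fingroup all_field.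
Set Implicit Arguments. Unset Strict Implicit. Unset Printing Implicit Defensive.
Import GRing.Theory Num.Theory.
Local Open Scope ring_scope.

(* Each sigma_i preserves S (this is what undirectedness of C(G,S) and of
   C(G,S)^sigma_i forces), so the permutation matrix P_i of sigma_i
   commutes with the adjacency matrix A of C(G,S); all these matrices are real
   symmetric and the P_i commute, so they have a common eigenbasis, in which
   A has eigenvalues a_j and P_i has eigenvalues e_ij = +-1.  The adjacency
   matrix of the twist by prod_{i in I} sigma_i is A * prod_{i in I} P_i, with
   eigenvalues a_j * prod_{i in I} e_ij.  If all twists were isospectral to
   C(G,S), then summing the resulting multiplicity identities over all subsets
   I shows that the a_j with some e_ij = -1 form a multiset symmetric about the
   origin; their number is the codimension of the common fixed space of the
   sigma_i in L^2(G), against the hypothesis.  Isomorphic graphs being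
   isospectral gives the last claim. *)

Lemma char_poly_similar n (Q M N : 'M[algC]_n) :
  Q \in unitmx -> Q *m M = N *m Q -> char_poly M = char_poly N.
Proof.
move=> Qu QM.
have QcharM : map_mx polyC Q *m char_poly_mx M = char_poly_mx N *m map_mx polyC Q.
  rewrite /char_poly_mx mulmxBr mulmxBl -!map_mxM QM.
  by rewrite mul_mx_scalar mul_scalar_mx.
have := congr1 determinant QcharM; rewrite !det_mulmx det_map_mx /= mulrC.
by apply: mulIf; rewrite polyC_eq0 -unitfE -unitmxE.
Qed.

Lemma spectrum_similar_diag n (Q M : 'M[algC]_n) d : Q \in unitmx ->
  Q *m M = diag_mx d *m Q -> perm_eq (spectrum M) [seq d 0 j | j <- enum 'I_n].
Proof.
move=> Qu QM; rewrite /spectrum; case: closed_field_poly_normal => r /=.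
rewrite (monicP (char_poly_monic M)) scale1r (char_poly_similar Qu QM).
rewrite char_poly_trig ?diag_mx_is_trig // => charM; apply: prod_XsubC_eq.
rewrite -charM big_map big_enum /=; apply: eq_bigr => j _.
by rewrite mxE eqxx mulr1n.
Qed.

Lemma normalmx_diagonalizable (C : numClosedFieldType) n (M : 'M[C]_n) :
  M \is normalmx -> diagonalizable M.
Proof.
move/orthomx_spectralP=> M_spectral; exists (spectralmx M); first exact: spectral_unit.
apply/(similar_diagLR (spectral_unit M)); exists (spectral_diag M).
by rewrite conjVmx ?spectral_unit.
Qed.

Lemma real_symmetric_diagonalizable (C : numClosedFieldType) n (M : 'M[C]_n) :
  M^T = M -> map_mx Num.conj M = M -> diagonalizable M.
Proof.
by move=> Msym Mreal; apply/normalmx_diagonalizable/normalmxP; rewrite Msym Mreal.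
Qed.

Lemma similar_diag_mulmx (F : fieldType) n (Q M : 'M[F]_n) : Q \in unitmx ->
  similar_diag Q M -> Q *m M = diag_mx (\row_j conjmx Q M j j) *m Q.
Proof.
move=> Qu /diag_mxP [d Md].
have -> : \row_j conjmx Q M j j = d by apply/rowP => j; rewrite mxE Md mxE eqxx mulr1n.
by rewrite -Md conjumx // mulmxKV.
Qed.

Lemma eigenvalue_sign (F : fieldType) n (Q M : 'M[F]_n) d j : Q \in unitmx ->
  M *m M = 1%:M -> Q *m M = diag_mx d *m Q -> d 0 j = 1 \/ d 0 j = -1.
Proof.
move=> Qu MM QM.
have : Q *m (M *m M) = diag_mx d *m diag_mx d *m Q.
  by rewrite mulmxA QM -mulmxA QM mulmxA.
rewrite MM mulmx1 mulmx_diag => /(congr1 (fun N => (N *m invmx Q) j j)).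
rewrite mulmxK // mulmxV // !mxE eqxx mulr1n => /esym/eqP.
by rewrite -expr2 sqrf_eq1 => /orP [/eqP|/eqP]; [left|right].
Qed.

Lemma undirected_adjmxP (T : finType) (E : T -> T -> nat) :
  undirected (adjmx E) <-> (forall x y, E x y = E y x).
Proof.
split=> [Esym x y | Esym]; last by apply/matrixP => i j; rewrite !mxE Esym.
have := congr1 (fun M : 'M_#|T| => M (enum_rank y) (enum_rank x)) Esym.
by rewrite !mxE !enum_rankK => /eqP; rewrite eqr_nat => /eqP.
Qed.

Lemma adjmx_real (T : finType) (E : T -> T -> nat) :
  map_mx Num.conj (adjmx E) = adjmx E.
Proof. by apply/matrixP => i j; rewrite !mxE conjC_nat. Qed.

Definition fun_mx (T : finType) (f : T -> T) : 'M[algC]_#|T| :=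
  adjmx (fun x y => nat_of_bool (y == f x)).

Section FunMx.
Variable T : finType.
Implicit Types (f g : T -> T).

Lemma mul_fun_mx f (M : 'M[algC]_#|T|) i j :
  (fun_mx f *m M) i j = M (enum_rank (f (enum_val i))) j.
Proof.
rewrite !mxE (bigD1 (enum_rank (f (enum_val i)))) //= mxE enum_rankK eqxx mul1r.
rewrite big1 ?addr0 // => l /negPf fil; rewrite mxE.
case: eqP => [fi_l|_]; last by rewrite mul0r.
by rewrite -fi_l enum_valK eqxx in fil.
Qed.

Lemma mulmx_fun_mx f g m (M : 'M[algC]_(m, #|T|)) i j :
  cancel f g -> cancel g f -> (M *m fun_mx f) i j = M i (enum_rank (g (enum_val j))).
Proof.
move=> fK gK.
rewrite !mxE (bigD1 (enum_rank (g (enum_val j)))) //= mxE enum_rankK gK eqxx mulr1.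
rewrite big1 ?addr0 // => l /negPf gjl; rewrite mxE.
case: eqP => [jfl|_]; last by rewrite mulr0.
by rewrite jfl fK enum_valK eqxx in gjl.
Qed.

Lemma fun_mxM f g : fun_mx f *m fun_mx g = fun_mx (g \o f).
Proof. by apply/matrixP => i j; rewrite mul_fun_mx !mxE enum_rankK. Qed.

Lemma fun_mx_id : fun_mx (@id T) = 1%:M.
Proof. by apply/matrixP => i j; rewrite !mxE (inj_eq enum_val_inj) eq_sym. Qed.

Lemma eq_fun_mx f g : f =1 g -> fun_mx f = fun_mx g.
Proof. by move=> fg; apply/matrixP => i j; rewrite !mxE fg. Qed.

Lemma fun_mx_unit f : injective f -> fun_mx f \in unitmx.
Proof.
move=> /injF_bij [g fK gK].
have [] // := @mulmx1_unit _ _ (fun_mx f) (fun_mx g).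
by rewrite fun_mxM (eq_fun_mx (g := id)) ?fun_mx_id.
Qed.

Lemma fun_mx_sqr f : involutive f -> fun_mx f *m fun_mx f = 1%:M.
Proof. by move=> fK; rewrite fun_mxM (eq_fun_mx (g := id)) ?fun_mx_id. Qed.

Lemma fun_mx_diagonalizable f : involutive f -> diagonalizable (fun_mx f).
Proof.
move=> fK; apply: real_symmetric_diagonalizable; last exact: adjmx_real.
by apply/undirected_adjmxP => x y; rewrite eq_sym (can2_eq fK fK).
Qed.

End FunMx.

Lemma isospectral_similar n (Q M N : 'M[algC]_n) :
  Q \in unitmx -> Q *m M = N *m Q -> isospectral M N.
Proof. by move=> Qu QM; rewrite /isospectral /spectrum (char_poly_similar Qu QM). Qed.

Lemma graph_iso_isospectral (T : finType) (E1 E2 : T -> T -> nat) :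
  graph_iso E1 E2 -> isospectral (adjmx E1) (adjmx E2).
Proof.
move=> [phi [[g phiK gK] E21]]; apply: (isospectral_similar (Q := fun_mx g)).
  exact/fun_mx_unit/(can_inj gK).
apply/matrixP => i j; rewrite mul_fun_mx (mulmx_fun_mx _ _ _ gK phiK) !mxE !enum_rankK.
by rewrite -E21 gK.
Qed.

Lemma card_in_set1 (T : finType) (S : {set T}) (P : pred T) a :
  P =1 pred1 a -> #|[set s in S | P s]| = (a \in S).
Proof.
move=> Pa; have -> : [set s in S | P s] = S :&: [set a].
  by apply/setP => s; rewrite !inE Pa.
case: (boolP (a \in S)) => aS; first by rewrite (setIidPr _) ?sub1set ?cards1.
by rewrite disjoint_setI0 ?cards0 // disjoint_sym disjoints1.
Qed.

Lemma twisted_adjE (gT : finGroupType) (S : {set gT}) (tau tau' : gT -> gT) :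
  cancel tau tau' -> cancel tau' tau -> twisted_adj S tau = cayley_adj S *m fun_mx tau.
Proof.
move=> tauK tau'K; apply/matrixP => i j.
rewrite (mulmx_fun_mx _ _ _ tauK tau'K) !mxE enum_rankK.
congr (_%:R); apply: eq_card => s; rewrite !inE; congr andb.
by apply/eqP/eqP => [->|<-]; rewrite ?tauK ?tau'K.
Qed.

Lemma group_aut1 (gT : finGroupType) (f : gT -> gT) : is_group_aut f -> f 1%g = 1%g.
Proof.
move=> [_ fM]; apply: (mulgI (f 1%g)).
by rewrite -fM !mulg1.
Qed.

Section TwistByInvolution.
Variables (gT : finGroupType) (S : {set gT}) (f : gT -> gT).
Hypotheses (f_aut : is_group_aut f) (fK : involutive f).

Lemma undirected_twist_stable :
  undirected (cayley_adj S) -> undirected (twisted_adj S f) ->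
  forall y, (f y \in S) = (y \in S).
Proof.
move=> /undirected_adjmxP cayley_sym /undirected_adjmxP twisted_sym y.
have cayley_from1 : cayley_edges S 1%g y = (y \in S).
  by apply: card_in_set1 => s; rewrite /= mul1g eq_sym.
have cayley_to1 : cayley_edges S y 1%g = ((y^-1)%g \in S).
  apply: card_in_set1 => s; apply/eqP/eqP => [ys1|->]; last by rewrite mulgV.
  by rewrite -(mulKg y s) -ys1 mulg1.
have twisted_from1 : twisted_edges S f 1%g y = (f y \in S).
  by apply: card_in_set1 => s; rewrite /= mul1g; apply/eqP/eqP => ->; rewrite fK.
have twisted_to1 : twisted_edges S f y 1%g = ((y^-1)%g \in S).
  apply: card_in_set1 => s; apply/eqP/eqP => [fys1|->]; last by rewrite mulgV group_aut1.
  have ys1 : (y * s)%g = 1%g by rewrite -(fK (y * s)%g) -fys1 group_aut1.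
  by rewrite -(mulKg y s) ys1 mulg1.
have := twisted_sym 1%g y.
rewrite twisted_from1 twisted_to1 -cayley_to1 -cayley_sym cayley_from1.
by move=> /(congr1 odd); rewrite !oddb.
Qed.

Lemma cayley_adj_fun_mx_comm : (forall y, (f y \in S) = (y \in S)) ->
  cayley_adj S *m fun_mx f = fun_mx f *m cayley_adj S.
Proof.
move=> fS; have [_ fM] := f_aut; apply/matrixP => i j.
rewrite (mulmx_fun_mx _ _ _ fK fK) mul_fun_mx !mxE !enum_rankK.
congr (_%:R); rewrite -[LHS](card_preimset _ (inv_inj fK)).
apply: eq_card => s; rewrite !inE fS; congr andb.
by rewrite -(inj_eq (inv_inj fK)) fK fM fK.
Qed.

End TwistByInvolution.

Lemma sum_subsets_prod (R : comNzRingType) (K : finType) (x : K -> R) :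
  \sum_(I : {set K}) \prod_(i in I) x i = \prod_i (x i + 1).
Proof.
rewrite bigA_distr; apply: eq_bigr => I _.
by rewrite big_mkcond.
Qed.

Lemma sum_subsets_sign_defect (K : finType) (e : K -> algC) :
  (forall i, e i = 1 \/ e i = -1) ->
  \sum_(I : {set K}) (1 - \prod_(i in I) e i) = 2 ^+ #|K| * [exists i, e i != 1]%:R.
Proof.
move=> e_sign; rewrite sumrB sum_subsets_prod.
have -> : \sum_(I : {set K}) (1 : algC) = 2 ^+ #|K|.
  transitivity (\sum_(I : {set K}) \prod_(i in I) (1 : algC)).
    by apply: eq_bigr => I _; rewrite big1_eq.
  by rewrite sum_subsets_prod prodr_const.
case: existsP => [[i0 ei0]|all1].
  have ei0N : e i0 = -1 by case: (e_sign i0) ei0 => ->; rewrite ?eqxx.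
  by rewrite (bigD1 i0) //= ei0N addNr mul0r subr0 mulr1.
rewrite mulr0 (eq_bigr (fun _ => 2)) ?prodr_const ?subrr // => i _.
by have /eqP -> : e i == 1 by apply/negPn/negP => ei; apply: all1; exists i.
Qed.

Lemma natr_count_enum (R : pzSemiRingType) (I : finType) (p : pred I) :
  (count p (enum I))%:R = \sum_j (p j)%:R :> R.
Proof.
rewrite -sum1_count natr_sum big_mkcond big_enum /=.
by apply: eq_bigr => j _; case: (p j).
Qed.

Lemma perm_twist_balance (I : finType) (a chi : I -> algC) b :
  (forall j, chi j = 1 \/ chi j = -1) ->
  perm_eq [seq a j | j <- enum I] [seq a j * chi j | j <- enum I] ->
  \sum_j (1 - chi j) * ((a j == - b)%:R - (a j == b)%:R) = 0.
Proof.
move=> chi_sign /seq.permP /(_ (pred1 b)).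
rewrite (count_map a) (count_map (fun j => a j * chi j)) => count_b.
transitivity ((2 : algC) * \sum_j ((a j * chi j == b)%:R - (a j == b)%:R)).
  rewrite mulr_sumr; apply: eq_bigr => j _.
  case: (chi_sign j) => ->; first by rewrite subrr mul0r mulr1 subrr mulr0.
  by rewrite opprK mulrN1 eqr_oppLR.
rewrite sumrB -(natr_count_enum _ (fun j => a j == b)) count_b natr_count_enum.
by rewrite subrr mulr0.
Qed.

Lemma sign_twists_symmetric (I K : finType) (a : I -> algC) (e : K -> I -> algC) :
  (forall i j, e i j = 1 \/ e i j = -1) ->
  (forall T : {set K}, perm_eq [seq a j | j <- enum I]
                               [seq a j * \prod_(i in T) e i j | j <- enum I]) ->
  symmetric_about_origin [seq a j | j <- enum I & [exists i, e i j != 1]].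
Proof.
move=> e_sign twist_perm.
have chi_sign T j : \prod_(i in T) e i j = 1 \/ \prod_(i in T) e i j = -1.
  apply: (big_ind (fun x : algC => x = 1 \/ x = -1)); [by left | | by move=> i _].
  by move=> x y [->|->] [->|->]; rewrite ?mul1r ?mulr1 ?mulN1r ?opprK; [left|right|right|left].
have balance b :
    \sum_j [exists i, e i j != 1]%:R * ((a j == - b)%:R - (a j == b)%:R) = 0 :> algC.
  have : \sum_(T : {set K}) \sum_j (1 - \prod_(i in T) e i j) *
           ((a j == - b)%:R - (a j == b)%:R) = 0.
    by apply: big1 => T _; apply: perm_twist_balance.
  rewrite exchange_big /=.
  under eq_bigr do rewrite -mulr_suml sum_subsets_sign_defect // -mulrA.
  rewrite -mulr_sumr => /eqP; rewrite mulf_eq0 expf_eq0 pnatr_eq0 andbF /=.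
  by move/eqP.
apply/allP => x _; apply/eqP.
rewrite (count_map _ (pred1 x)) (count_map -%R).
rewrite (count_map a (preim -%R (pred1 x))).
rewrite !(count_filter _ (fun j => [exists i, e i j != 1])).
apply/eqP; rewrite -(eqr_nat algC) !natr_count_enum eq_sym -subr_eq0 -sumrB; apply/eqP.
rewrite -[RHS](balance x); apply: eq_bigr => j _ /=.
rewrite eqr_oppLR; case: [exists i, e i j != 1];
by rewrite ?andbT ?andbF ?mul1r ?mul0r ?subrr.
Qed.

Section EigenbasisKernels.
Variables (K : fieldType) (vT : vectType K) (n : nat) (b : 'I_n -> vT).
Hypothesis b_basis : basis_of fullv [tuple b j | j < n].

Lemma basis_filter_free (P : pred 'I_n) : free [seq b j | j <- enum 'I_n & P j].
Proof.
apply: (catl_free (Y := [seq b j | j <- enum 'I_n & ~~ P j])); rewrite -map_cat.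
have /permPl enumP :
    perm_eql ([seq j <- enum 'I_n | P j] ++ [seq j <- enum 'I_n | ~~ P j]) (enum 'I_n).
  exact: perm_filterC.
rewrite (perm_free (perm_map b enumP)).
have -> : [seq b j | j <- enum 'I_n] = [tuple b j | j < n] :> seq vT.
  by rewrite -[RHS]map_tnth_enum; apply: eq_map => j; rewrite tnth_mktuple.
exact: basis_free b_basis.
Qed.

Variables (I : finType) (f : I -> 'End(vT)) (d : I -> 'I_n -> K).
Hypothesis f_eigen : forall i j, f i (b j) = d i j *: b j.

Lemma bigcap_lker_eigenbasis :
  (\bigcap_i lker (f i))%VS = span [seq b j | j <- enum 'I_n & [forall i, d i j == 0]].
Proof.
pose X := [tuple b j | j < n]; apply/eqP; rewrite eqEsubv; apply/andP; split.
  apply/subvP => v v_ker.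
  have v_sum : v = \sum_j coord X j v *: b j.
    by rewrite {1}(coord_basis b_basis (memvf v)); under eq_bigr do rewrite nth_mktuple.
  have coord_ker i j : coord X j v * d i j = 0.
    have : f i v = 0.
      by apply/eqP; rewrite -memv_ker; apply: (subvP (bigcapv_inf _ _ _)) v_ker.
    rewrite {1}v_sum linear_sum /= => /(congr1 (coord X j)).
    under eq_bigr do rewrite linearZ /= f_eigen scalerA -[b _](nth_mktuple _ 0).
    by rewrite coord_sum_free ?(basis_free b_basis) // linear0.
  rewrite v_sum (bigID [pred j | [forall i, d i j == 0]]) /= [X in _ + X]big1 ?addr0.
    apply: memv_suml => j dj0; apply/memvZ/memv_span.
    by apply: map_f; rewrite mem_filter dj0 mem_enum.
  move=> j /forallPn [i /negPf dij_neq0].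
  by have /eqP := coord_ker i j; rewrite mulf_eq0 dij_neq0 orbF => /eqP ->; rewrite scale0r.
apply/span_subvP => v /mapP [j]; rewrite mem_filter => /andP [dj0 _] ->.
apply/subv_bigcapP => i _; rewrite -memvE memv_ker f_eigen.
by move/forallP: dj0 => /(_ i) /eqP ->; rewrite scale0r.
Qed.

Lemma dim_bigcap_lker_eigenbasis :
  \dim (\bigcap_i lker (f i)) = count [pred j | [forall i, d i j == 0]] (enum 'I_n).
Proof.
rewrite bigcap_lker_eigenbasis (eqnP (basis_filter_free _)).
by rewrite size_map size_filter.
Qed.

End EigenbasisKernels.

Section L2Precomposition.
Variables (gT : finGroupType) (sg : gT -> gT).

Lemma precomp_minus_is_linear : linear (precomp_minus sg).
Proof.
move=> c f g; apply/ffunP => x; rewrite !ffunE.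
by rewrite scalerBr opprD addrACA.
Qed.

HB.instance Definition _ := GRing.isLinear.Build algC (L2 gT) (L2 gT) _
  (precomp_minus sg) precomp_minus_is_linear.

End L2Precomposition.

Lemma dim_L2 (gT : finGroupType) : \dim (fullv : {vspace L2 gT}) = #|gT|.
Proof. by rewrite dimvf /dim /= muln1. Qed.

Definition mx_row_fun (gT : finGroupType) (Q : 'M[algC]_#|gT|) j : L2 gT :=
  [ffun x => Q j (enum_rank x)].

Lemma unitmx_rows_basis (gT : finGroupType) (Q : 'M[algC]_#|gT|) :
  Q \in unitmx -> basis_of fullv [tuple mx_row_fun Q j | j < #|gT|].
Proof.
move=> Qu; rewrite basisEfree subvf size_tuple dim_L2 leqnn !andbT.
apply/freeP => c; under eq_bigr do rewrite nth_mktuple; move=> /ffunP csum0.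
have : \row_j c j *m Q = 0.
  apply/rowP => y; rewrite !mxE.
  transitivity ((\sum_i c i *: mx_row_fun Q i) (enum_val y)); last by rewrite csum0 ffunE.
  by rewrite sum_ffunE; apply: eq_bigr => j _; rewrite !ffunE !mxE enum_valK.
by move/(canRL (mulmxK Qu)); rewrite mul0mx => /rowP c0 j; have := c0 j; rewrite !mxE.
Qed.

Lemma dim_L2_fixed (gT : finGroupType) k (sigma : 'I_k -> gT -> gT)
    (Q : 'M[algC]_#|gT|) (e : 'I_k -> 'rV[algC]_#|gT|) :
  (forall i, involutive (sigma i)) -> Q \in unitmx ->
  (forall i, Q *m fun_mx (sigma i) = diag_mx (e i) *m Q) ->
  \dim (L2_fixed sigma) = count [pred j | [forall i, e i 0 j == 1]] (enum 'I_#|gT|).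
Proof.
move=> sigmaK Qu Q_eigen.
rewrite (dim_bigcap_lker_eigenbasis (unitmx_rows_basis Qu) (d := fun i j => e i 0 j - 1)).
  by apply: eq_count => j; apply: eq_forallb => i; rewrite subr_eq0.
move=> i j; rewrite lfunE /=; apply/ffunP => x; rewrite !ffunE.
have := congr1 (fun M : 'M_#|gT| => M j (enum_rank x)) (Q_eigen i).
rewrite (mulmx_fun_mx _ _ _ (sigmaK i) (sigmaK i)) mul_diag_mx !mxE enum_rankK => ->.
by rewrite scalerBl scale1r.
Qed.

Section CayleyTwists.
Variables (gT : finGroupType) (S : {set gT}) (k : nat) (sigma : 'I_k -> gT -> gT).
Hypothesis sigmaK : forall i, involutive (sigma i).

Lemma aut_prod_inj (I : {set 'I_k}) : injective (aut_prod sigma I).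
Proof.
rewrite /aut_prod; elim: (enum I) => [|i s IHs] //=.
exact: inj_comp (inv_inj (sigmaK i)) IHs.
Qed.

Lemma cayley_common_eigenbasis :
  (forall i, is_group_aut (sigma i)) ->
  (forall i j x, sigma i (sigma j x) = sigma j (sigma i x)) ->
  undirected (cayley_adj S) -> (forall i, undirected (twisted_adj S (sigma i))) ->
  exists Q a (e : 'I_k -> 'rV_#|gT|), [/\ Q \in unitmx,
    Q *m cayley_adj S = diag_mx a *m Q &
    forall i, Q *m fun_mx (sigma i) = diag_mx (e i) *m Q].
Proof.
move=> sigma_aut sigma_comm S_und S_und_tw.
have A_comm i : cayley_adj S *m fun_mx (sigma i) = fun_mx (sigma i) *m cayley_adj S.
  apply: cayley_adj_fun_mx_comm (sigma_aut i) (sigmaK i) _.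
  exact: undirected_twist_stable (sigma_aut i) (sigmaK i) S_und (S_und_tw i).
have [Q Qu Q_diag] :
    codiagonalizable (cayley_adj S :: [seq fun_mx (sigma i) | i <- enum 'I_k]).
  apply/codiagonalizableP; split.
    move=> M N; rewrite !inE /comm_mx.
    move=> /predU1P [->|/mapP [i _ ->]] /predU1P [->|/mapP [j _ ->]] //.
    by rewrite !fun_mxM; apply: eq_fun_mx => x /=; rewrite sigma_comm.
  move=> M; rewrite inE => /predU1P [->|/mapP [i _ ->]]; last exact: fun_mx_diagonalizable.
  exact: real_symmetric_diagonalizable S_und (adjmx_real _).
exists Q, (\row_j conjmx Q (cayley_adj S) j j).
exists (fun i => \row_j conjmx Q (fun_mx (sigma i)) j j); split=> [//||i].
- by apply: similar_diag_mulmx => //; apply: (allP Q_diag); rewrite mem_head.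
- apply: similar_diag_mulmx => //; apply: (allP Q_diag).
  by rewrite inE map_f ?orbT ?mem_enum.
Qed.

Section CommonEigenbasis.
Variables (Q : 'M[algC]_#|gT|) (a : 'rV[algC]_#|gT|) (e : 'I_k -> 'rV[algC]_#|gT|).
Hypotheses (Qu : Q \in unitmx) (Q_cayley : Q *m cayley_adj S = diag_mx a *m Q).
Hypothesis Q_sigma : forall i, Q *m fun_mx (sigma i) = diag_mx (e i) *m Q.

Lemma eigenvalue_sigma_sign i j : e i 0 j = 1 \/ e i 0 j = -1.
Proof. exact: eigenvalue_sign Qu (fun_mx_sqr (sigmaK i)) (Q_sigma i). Qed.

Lemma fun_mx_aut_prod_eigen (I : {set 'I_k}) :
  Q *m fun_mx (aut_prod sigma I) = diag_mx (\row_j \prod_(i in I) e i 0 j) *m Q.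
Proof.
rewrite /aut_prod; under eq_mx do rewrite -big_enum /=.
elim: (enum I) => [|i s IHs] /=.
  rewrite fun_mx_id mulmx1 (_ : \row_j _ = const_mx 1) ?diag_const_mx ?mul1mx //.
  by apply/rowP => j; rewrite !mxE big_nil.
rewrite -fun_mxM mulmxA IHs -mulmxA Q_sigma mulmxA mulmx_diag.
by congr (diag_mx _ *m _); apply/rowP => j; rewrite !mxE big_cons mulrC.
Qed.

Lemma spectrum_twisted_aut_prod (I : {set 'I_k}) :
  perm_eq (spectrum (twisted_adj S (aut_prod sigma I)))
          [seq a 0 j * \prod_(i in I) e i 0 j | j <- enum 'I_#|gT|].
Proof.
have [tau' tauK tau'K] := injF_bij (@aut_prod_inj I).
rewrite (twisted_adjE S tauK tau'K).
have := spectrum_similar_diag (d := \row_j (a 0 j * \prod_(i in I) e i 0 j)) Qu.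
under eq_map do rewrite mxE; apply.
rewrite mulmxA Q_cayley -mulmxA fun_mx_aut_prod_eigen mulmxA mulmx_diag.
by congr (diag_mx _ *m _); apply/rowP => j; rewrite !mxE.
Qed.

Lemma codim_L2_fixed :
  (\dim (fullv : {vspace L2 gT}) - \dim (L2_fixed sigma))%N =
  count [pred j | [exists i, e i 0 j != 1]] (enum 'I_#|gT|).
Proof.
rewrite dim_L2 (dim_L2_fixed sigmaK Qu Q_sigma) -{1}(size_enum_ord #|gT|).
rewrite -(count_predC [pred j | [forall i, e i 0 j == 1]]) addKn.
by apply: eq_count => j; rewrite /= negb_forall.
Qed.

End CommonEigenbasis.
End CayleyTwists.

Theorem theorem4p7 (gT : finGroupType) (S : {set gT}) (k : nat)
  (sigma : 'I_k -> gT -> gT)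
  (Haut : forall i, is_group_aut (sigma i))
  (Hinv : forall i x, sigma i (sigma i x) = x)
  (Hcomm : forall i j x, sigma i (sigma j x) = sigma j (sigma i x))
  (Hund : undirected (cayley_adj S))
  (Hund_tw : forall i, undirected (twisted_adj S (sigma i)))
  (Hspec : ~ exists t : seq algC,
      [/\ size t = (\dim (fullv : {vspace L2 gT}) - \dim (L2_fixed sigma))%N,
          submultiset (spectrum (cayley_adj S)) t
        & symmetric_about_origin t]) :
  exists I : {set 'I_k}, I != set0 /\
    ~ isospectral (cayley_adj S) (twisted_adj S (aut_prod sigma I)) /\
    ~ graph_iso (cayley_edges S) (twisted_edges S (aut_prod sigma I)).
Proof.
have [Q [a [e [Qu Q_cayley Q_sigma]]]] :=
  cayley_common_eigenbasis Hinv Haut Hcomm Hund Hund_tw.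
case: (boolP [exists I : {set 'I_k}, (I != set0) &&
    ~~ perm_eq (spectrum (cayley_adj S)) (spectrum (twisted_adj S (aut_prod sigma I)))]).
  case/existsP => I /andP [I0 not_iso]; exists I; split=> //; split; first exact/negP.
  by move/graph_iso_isospectral; apply/negP.
move=> /existsPn all_iso; case: Hspec.
have spec_cayley := spectrum_similar_diag Qu Q_cayley.
exists [seq a 0 j | j <- enum 'I_#|gT| & [exists i, e i 0 j != 1]]; split.
- by rewrite size_map size_filter (codim_L2_fixed Hinv Qu Q_sigma).
- move=> x; rewrite (seq.permP spec_cayley) 2!(count_map (fun j => a 0 j) (pred1 x)).
  by rewrite count_filter; apply: sub_count => j /andP [].
apply: (sign_twists_symmetric (a := fun j => a 0 j) (e := fun i j => e i 0 j)).
  exact: (eigenvalue_sigma_sign Hinv Qu Q_sigma).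
move=> I.
have iso_I :
    perm_eq (spectrum (cayley_adj S)) (spectrum (twisted_adj S (aut_prod sigma I))).
  have [->|I0] := eqVneq I set0; last by move: (all_iso I); rewrite I0 negbK.
  by rewrite /aut_prod enum_set0.
rewrite perm_sym in spec_cayley; apply: perm_trans spec_cayley (perm_trans iso_I _).
exact: (spectrum_twisted_aut_prod Hinv Qu Q_cayley Q_sigma I).
Qed.
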